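(* Let $(\mathcal{L},\mathcal{D}(\mathcal{L}))$ be the generator of a $C_0$-contraction semigroup on a Banach space $\mathcal{X}$, $M\in\mathcal{B}(\mathcal{X})$ a contraction, and $P$ a projection with $\|M^n-P\|_\infty\le\delta^n$ for some $\delta\in(0,1)$ and all $n\in\mathbb{N}$. Assume there is $b\ge0$ such that $\|Pe^{t\mathcal{L}}(\mathbf{1}-P)\|_\infty\le tb$ and $\|(\mathbf{1}-P)e^{t\mathcal{L}}P\|_\infty\le tb$ for all $t\ge0$, and that $(P\mathcal{L}P,\mathcal{D}(\mathcal{L}P))$ is the generator of a $C_0$-semigroup. Then for all $n\in\mathbb{N}$ and all $x\in\mathcal{X}$ $$\Big\|\big(Me^{\frac1n\mathcal{L}}\big)^nx-\big(Pe^{\frac1n\mathcal{L}}P\big)^nx\Big\|\le\Big(\delta^n+\frac bn+\frac1n\,\frac{b(2+b)(\delta-\delta^n)}{1-\delta}e^{2b}\Big)\|x\|.$$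
   Context: $\mathcal{B}(\mathcal{X})$: bounded operators with operator norm $\|\cdot\|_\infty$; $\mathbf{1}$ the identity; contraction: norm at most $1$; projection: bounded idempotent. A $C_0$-contraction semigroup is a strongly continuous semigroup of contractions, denoted $e^{t\mathcal{L}}$ by its generator. $\mathcal{D}(\mathcal{L}P)=\{x:Px\in\mathcal{D}(\mathcal{L})\}$. *)

From HB Require Import structures.
From mathcomp Require Import all_boot all_order all_algebra.
From mathcomp Require Import all_classical all_reals all_analysis.
Set Implicit Arguments. Unset Strict Implicit. Unset Printing Implicit Defensive.
Import Order.TTheory GRing.Theory Num.Theory.
Import numFieldNormedType.Exports.
Local Open Scope classical_set_scope.
Local Open Scope ring_scope.

Section Defs.
Variables (R : realType) (X : completeNormedModType R).

Definition is_linear_op (A : X -> X) : Prop :=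
  forall (a : R) (x y : X), A (a *: x + y) = a *: A x + A y.

Definition is_bounded_op (A : X -> X) : Prop :=
  is_linear_op A /\ exists c : R, forall x, `|A x| <= c * `|x|.

Definition is_contraction_op (A : X -> X) : Prop :=
  is_bounded_op A /\ forall x, `|A x| <= `|x|.

Definition is_projection (P : X -> X) : Prop :=
  is_bounded_op P /\ forall x, P (P x) = P x.

Definition is_C0_semigroup (T : R -> X -> X) : Prop :=
  (forall t, 0 <= t -> is_bounded_op (T t)) /\
  (forall x, T 0 x = x) /\
  (forall s t x, 0 <= s -> 0 <= t -> T (s + t) x = T s (T t x)) /\
  (forall x, (fun h => T h x) @ 0^'+ --> x).

Definition is_C0_contraction_semigroup (T : R -> X -> X) : Prop :=
  is_C0_semigroup T /\ (forall t, 0 <= t -> is_contraction_op (T t)).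

Definition is_generator (T : R -> X -> X) (D : set X) (L : X -> X) : Prop :=
  (forall x, D x -> (fun h => h^-1 *: (T h x - x)) @ 0^'+ --> L x) /\
  (forall x, (exists l : X, (fun h => h^-1 *: (T h x - x)) @ 0^'+ --> l) -> D x).

End Defs.

(* From [|M^k - P| <= delta^k] one gets [MP = PM = P] and [|P| <= 1].  With
   [T = e^{L/n}] and [s = b/n], split the iterates [a_k = (M T)^k x] into
   [P a_k] and [v_k = a_k - P a_k].  Since [M - P] vanishes on the range of [P]
   and has norm at most [delta], [v_(k+1)] is [M - P] applied to [T v_k] plus a
   leak of size at most [s |x|] out of the range of [P]; hence
   [|v_k| <= (delta^k + s (delta + ... + delta^(k-1))) |x|].  The diagonal
   parts [P a_k] and [(P T P)^k x] then differ only by the accumulated leaks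
   [P T v_k] back into the range of [P], each of norm at most [s |v_k|]. *)
From HB Require Import structures.
From mathcomp Require Import all_boot all_order all_algebra.
From mathcomp Require Import all_classical all_reals all_analysis.
From mathcomp Require Import ring lra.
Set Implicit Arguments. Unset Strict Implicit. Unset Printing Implicit Defensive.
Import Order.TTheory GRing.Theory Num.Theory.
Import numFieldNormedType.Exports.
Local Open Scope classical_set_scope.
Local Open Scope ring_scope.

Section LinearOperators.
Variables (R : realType) (X : completeNormedModType R) (A : X -> X).

Lemma linear_opD : is_linear_op A -> forall x y, A (x + y) = A x + A y.
Proof. by move=> linA x y; have := linA 1 x y; rewrite !scale1r. Qed.

Lemma linear_opB : is_linear_op A -> forall x y, A (x - y) = A x - A y.
Proof. by move=> linA x y; have := linA (-1) y x; rewrite !scaleN1r !(addrC (- _)). Qed.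

Lemma norm_iter_contraction :
  (forall z, `|A z| <= `|z|) -> forall k z, `|ssrnat.iter k A z| <= `|z|.
Proof. by move=> contrA; elim=> [|k IH] z //=; apply: le_trans (contrA _) (IH z). Qed.

End LinearOperators.

Lemma le0_of_le_geometric (R : realType) (d a c : R) :
  0 < d -> d < 1 -> 0 <= c -> (forall k, (0 < k)%N -> a <= c * d ^+ k) -> a <= 0.
Proof.
move=> d_gt0 d_lt1 c_ge0 le_a; rewrite leNgt; apply/negP => a_gt0.
have eps_gt0 : 0 < a / (c + 1) by rewrite divr_gt0 // ltr_wpDl.
have normd_lt1 : `|d| < 1 by rewrite ger0_norm ?ltW.
have [N _ small] := @cvgr_lt _ _ _ _ _ 0 (cvg_expr normd_lt1) _ eps_gt0.
have dN : d ^+ N.+1 < a / (c + 1) := small N.+1 (leqnSn N).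
have : c * d ^+ N.+1 <= c * (a / (c + 1)) by rewrite ler_wpM2l // ltW.
have : c * (a / (c + 1)) < a by rewrite mulrA ltr_pdivrMr ?ltr_wpDl // mulrC ltr_pM2l //; lra.
have := le_a N.+1 erefl; lra.
Qed.

Lemma eq0_of_norm_le_geometric (R : realType) (X : normedModType R) (d c : R) (u : X) :
  0 < d -> d < 1 -> 0 <= c -> (forall k, (0 < k)%N -> `|u| <= c * d ^+ k) -> u = 0.
Proof.
move=> d_gt0 d_lt1 c_ge0 le_u; apply/eqP; rewrite -normr_eq0 eq_le normr_ge0 andbT.
exact: le0_of_le_geometric le_u.
Qed.

(* [geom_tail d k = \sum_(1 <= i < k) d ^+ i] for [k >= 1]. *)
Definition geom_tail (R : realType) (d : R) (k : nat) := (d - d ^+ k) / (1 - d).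

Section GeometricTail.
Variables (R : realType) (d : R).
Hypotheses (d_ge0 : 0 <= d) (d_lt1 : d < 1).

Lemma geom_tail1 : geom_tail d 1 = 0.
Proof. by rewrite /geom_tail expr1 subrr mul0r. Qed.

Lemma geom_tailS k : geom_tail d k.+1 = geom_tail d k + d ^+ k.
Proof. by rewrite /geom_tail exprS; field; rewrite subr_eq0 gt_eqF. Qed.

Lemma geom_tailS_mul k : geom_tail d k.+1 = d * (1 + geom_tail d k).
Proof. by rewrite /geom_tail exprS; field; rewrite subr_eq0 gt_eqF. Qed.

Lemma geom_tail_ge0 k : (0 < k)%N -> 0 <= geom_tail d k.
Proof.
move=> k_gt0; rewrite divr_ge0 ?subr_ge0 ?(ltW d_lt1) //.
exact: ler_iXnr k_gt0 d_ge0 (ltW d_lt1).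
Qed.

End GeometricTail.

Section GeometricLimitProjection.
Variables (R : realType) (X : completeNormedModType R) (M P : X -> X) (d : R).
Hypotheses (linM : is_linear_op M) (contrM : forall z, `|M z| <= `|z|).
Hypotheses (d_gt0 : 0 < d) (d_lt1 : d < 1).
Hypothesis iterM_P : forall k z, (0 < k)%N -> `|ssrnat.iter k M z - P z| <= d ^+ k * `|z|.

Lemma limit_projection_contraction z : `|P z| <= `|z|.
Proof.
rewrite -subr_le0; apply: (le0_of_le_geometric d_gt0 d_lt1 (normr_ge0 z)) => k k_gt0.
have := ler_normB (ssrnat.iter k M z) (ssrnat.iter k M z - P z).
rewrite opprB addrC subrK.
have := norm_iter_contraction contrM k z; have := iterM_P z k_gt0; lra.
Qed.

Let geometric_pair_le k (c : R) :
  0 <= c -> d ^+ k * c + d ^+ k.+1 * c <= 2 * c * d ^+ k.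
Proof.
move=> c_ge0; have d1 : 0 <= 1 - d by rewrite subr_ge0 ltW.
have := mulr_ge0 d1 (mulr_ge0 (exprn_ge0 k (ltW d_gt0)) c_ge0).
rewrite exprS; lra.
Qed.

Lemma limit_projection_fixed z : M (P z) = P z.
Proof.
apply/subr0_eq/(eq0_of_norm_le_geometric d_gt0 d_lt1 (c := 2 * `|z|)) => // k k_gt0.
have -> : M (P z) - P z = M (P z - ssrnat.iter k M z) + (ssrnat.iter k.+1 M z - P z).
  by rewrite (linear_opB linM) /= addrA subrK.
apply: le_trans (ler_normD _ _) _.
have head_le : `|M (P z - ssrnat.iter k M z)| <= d ^+ k * `|z|.
  by rewrite (le_trans (contrM _)) // distrC iterM_P.
by apply: le_trans (lerD head_le (iterM_P z (ltn0Sn k))) _; apply: geometric_pair_le.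
Qed.

Lemma limit_projection_absorbs z : P (M z) = P z.
Proof.
apply/subr0_eq/(eq0_of_norm_le_geometric d_gt0 d_lt1 (c := 2 * `|z|)) => // k k_gt0.
have -> : P (M z) - P z
    = (P (M z) - ssrnat.iter k M (M z)) + (ssrnat.iter k.+1 M z - P z).
  by rewrite iterSr addrA subrK.
apply: le_trans (ler_normD _ _) _.
have head_le : `|P (M z) - ssrnat.iter k M (M z)| <= d ^+ k * `|z|.
  rewrite distrC (le_trans (iterM_P _ k_gt0)) //.
  by rewrite ler_pM2l ?exprn_gt0.
by apply: le_trans (lerD head_le (iterM_P z (ltn0Sn k))) _; apply: geometric_pair_le.
Qed.

End GeometricLimitProjection.

Section SplitIterationDefect.
Variables (R : realType) (X : completeNormedModType R) (M P T : X -> X) (d s : R).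
Hypotheses (linM : is_linear_op M) (linP : is_linear_op P) (linT : is_linear_op T).
Hypotheses (contrM : forall z, `|M z| <= `|z|) (contrP : forall z, `|P z| <= `|z|).
Hypothesis contrT : forall z, `|T z| <= `|z|.
Hypotheses (PP : forall z, P (P z) = P z) (MP : forall z, M (P z) = P z).
Hypothesis PM : forall z, P (M z) = P z.
Hypothesis M_P : forall z, `|M z - P z| <= d * `|z|.
Hypothesis leak_in : forall z, `|P (T (z - P z))| <= s * `|z|.
Hypothesis leak_out : forall z, `|T (P z) - P (T (P z))| <= s * `|z|.
Hypotheses (d_ge0 : 0 <= d) (d_lt1 : d < 1) (s_ge0 : 0 <= s).
Variable x : X.

Let a k := ssrnat.iter k (fun y => M (T y)) x.
Let w k := ssrnat.iter k (fun y => P (T (P y))) x.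
Let v k := a k - P (a k).
Let e k := P (a k) - P (w k).

Let norm_a k : `|a k| <= `|x|.
Proof. exact: norm_iter_contraction (fun z => le_trans (contrM _) (contrT z)) k x. Qed.

Let P_v k : P (v k) = 0.
Proof. by rewrite /v (linear_opB linP) PP subrr. Qed.

Let v_succ k : v k.+1 = (M (T (P (a k)) - P (T (P (a k)))) - P (T (P (a k)) - P (T (P (a k)))))
                      + (M (T (v k)) - P (T (v k))).
Proof.
have QD y z : M (y + z) - P (y + z) = (M y - P y) + (M z - P z).
  by rewrite (linear_opD linM) (linear_opD linP) opprD addrACA.
have QP y : M (y - P y) - P (y - P y) = M y - P y.
  by rewrite (linear_opB linM) (linear_opB linP) MP PP subrr subr0.
by rewrite QP -QD -(linear_opD linT) /v subrKC /= PM.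
Qed.

Let e_succ k : e k.+1 = P (T (e k)) + P (T (v k)).
Proof.
rewrite /e /v /= PM PP !(linear_opB linT, linear_opB linP).
by rewrite [RHS]addrC addrA subrK.
Qed.

Lemma norm_offdiag_iter k : `|v k.+1| <= (d ^+ k.+1 + s * geom_tail d k.+1) * `|x|.
Proof.
elim: k => [|k IH].
  rewrite geom_tail1 mulr0 addr0 expr1 /v /= PM.
  by rewrite (le_trans (M_P _)) // ler_wpM2l.
rewrite v_succ; apply: le_trans (ler_normD _ _) _.
have leak_le := le_trans (leak_out _) (ler_wpM2l s_ge0 (norm_a k.+1)).
have damped_leak_le := le_trans (M_P _) (ler_wpM2l d_ge0 leak_le).
have damped_le := le_trans (M_P _) (ler_wpM2l d_ge0 (le_trans (contrT _) IH)).
apply: le_trans (lerD damped_leak_le damped_le) _.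
rewrite (geom_tailS_mul d_lt1 k.+1) [d ^+ k.+2]exprS; lra.
Qed.

Lemma norm_diag_iter k :
  `|e k.+1| <= (s + s * geom_tail d k.+1 + k%:R * s ^+ 2 * geom_tail d k.+1) * `|x|.
Proof.
elim: k => [|k IH].
  rewrite geom_tail1 !mulr0 !addr0 /e /= PM PP -!(linear_opB linP, linear_opB linT).
  exact: leak_in.
rewrite e_succ; apply: le_trans (ler_normD _ _) _.
have := le_trans (contrP _) (le_trans (contrT _) IH).
have leak_le := leak_in (v k.+1); rewrite P_v subr0 in leak_le.
have := le_trans leak_le (ler_wpM2l s_ge0 (norm_offdiag_iter k)).
have := mulr_ge0 (mulr_ge0 (ler0n R k.+1) (sqr_ge0 s))
          (mulr_ge0 (exprn_ge0 k.+1 d_ge0) (normr_ge0 x)).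
rewrite (geom_tailS d_lt1 k.+1) -natr1; nra.
Qed.

Lemma norm_split_iter_defect k :
  `|a k.+1 - w k.+1|
    <= (d ^+ k.+1 + s + (2 * s + k%:R * s ^+ 2) * geom_tail d k.+1) * `|x|.
Proof.
have -> : a k.+1 - w k.+1 = e k.+1 + v k.+1.
  by rewrite /e /v /w /= PP [RHS]addrC addrA subrK.
apply: le_trans (ler_normD _ _) _.
apply: le_trans (lerD (norm_diag_iter k) (norm_offdiag_iter k)) _; lra.
Qed.

End SplitIterationDefect.

Lemma split_defect_coef_le (R : realType) (b S : R) (k : nat) : 0 <= b -> 0 <= S ->
  (2 * (k.+1%:R^-1 * b) + k%:R * (k.+1%:R^-1 * b) ^+ 2) * S
    <= k.+1%:R^-1 * (b * (2 + b) * S) * expR (2 * b).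
Proof.
move=> b_ge0 S_ge0; set t := k.+1%:R^-1.
have t_ge0 : 0 <= t by rewrite invr_ge0.
have kt_le1 : k%:R * t <= 1.
  by rewrite -[X in _ <= X](@mulfV _ k.+1%:R) ?pnatr_eq0 // ler_wpM2r // ler_nat.
have coef_le : 2 * (t * b) + k%:R * (t * b) ^+ 2 <= t * (b * (2 + b)).
  have := mulr_ge0 t_ge0 (sqr_ge0 b); nra.
apply: le_trans (ler_wpM2r S_ge0 coef_le) _; rewrite -[t * _ * S]mulrA; apply: ler_peMr.
  by rewrite !mulr_ge0 // addr_ge0.
by rewrite (le_trans _ (expR_ge1Dx _)) // lerDl mulr_ge0.
Qed.

Theorem lemma5p2 (R : realType) (X : completeNormedModType R)
  (T : R -> X -> X) (D : set X) (L : X -> X)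
  (M P : X -> X) (delta b : R) :
  is_C0_contraction_semigroup T ->
  is_generator T D L ->
  is_contraction_op M ->
  is_projection P ->
  0 < delta -> delta < 1 ->
  (forall (n : nat) (x : X), (0 < n)%N ->
     `|ssrnat.iter n M x - P x| <= delta ^+ n * `|x|) ->
  0 <= b ->
  (forall (t : R) (x : X), 0 <= t -> `|P (T t (x - P x))| <= t * b * `|x|) ->
  (forall (t : R) (x : X), 0 <= t -> `|T t (P x) - P (T t (P x))| <= t * b * `|x|) ->
  (exists S : R -> X -> X, is_C0_semigroup S /\
     is_generator S [set x | D (P x)] (fun x => P (L (P x)))) ->
  forall (n : nat) (x : X), (0 < n)%N ->
    `|ssrnat.iter n (fun y => M (T (n%:R^-1) y)) x
      - ssrnat.iter n (fun y => P (T (n%:R^-1) (P y))) x|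
    <= (delta ^+ n + b / n%:R
        + n%:R^-1 * (b * (2 + b) * (delta - delta ^+ n) / (1 - delta)) * expR (2 * b))
       * `|x|.
Proof.
move=> [_ contrT] _ [[linM _] contrM] [[linP _] PP] d_gt0 d_lt1 iterM_P b_ge0
  leak_in leak_out _ [//|k] x _.
set t := k.+1%:R^-1; have t_ge0 : 0 <= t by rewrite invr_ge0.
have [[linT _] contrTt] := contrT t t_ge0.
have contrP := limit_projection_contraction contrM d_gt0 d_lt1 iterM_P.
have MP := limit_projection_fixed linM contrM d_gt0 d_lt1 iterM_P.
have PM := limit_projection_absorbs contrM d_gt0 d_lt1 iterM_P.
have M_P z : `|M z - P z| <= delta * `|z| by rewrite -[delta]expr1 (iterM_P 1).
apply: le_trans (norm_split_iter_defect linM linP linT contrM contrP contrTt PP MP PM M_P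
  (leak_in t ^~ t_ge0) (leak_out t ^~ t_ge0) (ltW d_gt0) d_lt1 (mulr_ge0 t_ge0 b_ge0) x k) _.
have -> : b * (2 + b) * (delta - delta ^+ k.+1) / (1 - delta)
    = b * (2 + b) * geom_tail delta k.+1 by rewrite /geom_tail mulrA.
rewrite ler_wpM2r // [b / _]mulrC lerD2l.
by apply: split_defect_coef_le b_ge0 _; rewrite geom_tail_ge0 ?ltW.
Qed.
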